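(* For all parameter values $\alpha_L,\alpha_R,\mu_L,\mu_R,\gamma_{RL},\gamma_{LR}>0$ (no symmetry assumed), the system \[ \dot L=\alpha_L L C-\mu_L L+\gamma_{RL} R C,\qquad \dot R=\alpha_R R C-\mu_R R+\gamma_{LR} L C,\qquad C=1-L-R, \] has no closed (periodic) orbits in the interior of the simplex $\Sigma=\{(L,R): L\ge0,\ R\ge0,\ L+R\le1\}$. *)

From Stdlib Require Import Reals.
From Coquelicot Require Import Coquelicot.
Open Scope R_scope.

Definition Cfree (l r : R) : R := 1 - l - r.

Definition fL (aL muL gRL : R) (l r : R) : R :=
  aL * l * Cfree l r - muL * l + gRL * r * Cfree l r.
Definition fR (aR muR gLR : R) (l r : R) : R :=
  aR * r * Cfree l r - muR * r + gLR * l * Cfree l r.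

Definition in_simplex_interior (l r : R) : Prop :=
  0 < l /\ 0 < r /\ l + r < 1.

From Stdlib Require Import Reals ZArith Lra Lia.
From Coquelicot Require Import Coquelicot.
Open Scope R_scope.

(* In the coordinates s = R/L and C = 1 - L - R the system becomes
     s' = s (C kappa(s) + d),   C' = -(1 - C) (C p(s) - q(s)),   d = muL - muR,
   with kappa decreasing and p > 0; exchanging L and R we may assume d >= 0.
   Along a T-periodic solution any function with nonpositive derivative is
   constant, so its derivative vanishes identically.  If d = 0, the primitive of
   -kappa(x)/x evaluated at s decreases at rate -C kappa(s)^2, hence kappa(s) = 0.
   If d > 0, the equation s' = 0 at the minimum of s gives kappa(s) < -d along the
   whole orbit, so the nullcline C = -d/kappa(s) stays in (0,1), and
     Phi = kappa(s) (C + ln(1 - C)) + d ln(1 - C) + H(s),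
   with H' chosen so that Phi' vanishes on the nullcline, satisfies
   Phi' <= kappa(s) p(s) (C + d/kappa(s))^2 <= 0 because y + ln(1 - y) is
   decreasing; hence the orbit lies on the nullcline.  In both cases s' = 0, and
   then (C - q/p)^2 decreases, so C is constant as well. *)

Lemma ex_derive_continuity_pt (f : R -> R) x : ex_derive f x -> continuity_pt f x.
Proof. intros h. apply continuity_pt_filterlim. exact (ex_derive_continuous f x h). Qed.

Lemma derive_nonpos_antitone (f df : R -> R) a b : a <= b ->
  (forall x, a <= x <= b -> is_derive f x (df x)) -> (forall x, a <= x <= b -> df x <= 0) ->
  f b <= f a.
Proof.
  intros hab hd hneg.
  destruct (MVT_gen f a b df) as [x [hx hmvt]]; rewrite Rmin_left, Rmax_right in * by lra.
  - intros x hx. apply hd. lra.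
  - intros x hx. apply ex_derive_continuity_pt. eexists. apply hd, hx.
  - pose proof (hneg x hx). nra.
Qed.

Lemma derive_eq0_const (f : R -> R) : (forall t, is_derive f t 0) -> forall t, f t = f 0.
Proof.
  intros hd t. destruct (MVT_gen f 0 t (fun _ => 0)) as [x [_ hmvt]].
  - intros x _. apply hd.
  - intros x _. apply ex_derive_continuity_pt. eexists. apply hd.
  - lra.
Qed.

Lemma is_derive_min_eq0 (f : R -> R) x l : is_derive f x l -> (forall y, f x <= f y) -> l = 0.
Proof.
  intros hd hmin. apply is_derive_Reals in hd.
  exact (deriv_minimum f (x - 1) (x + 1) x (exist _ l hd) ltac:(lra) ltac:(lra)
           (fun y _ _ => hmin y)).
Qed.

Lemma continuous_Rmax_l a x : continuous (fun y => Rmax y a) x.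
Proof.
  apply continuity_pt_filterlim, continuity_pt_locally. intros eps.
  exists eps. intros y hy. change (Rabs (y - x) < eps) in hy.
  unfold Rmax. destruct (Rle_dec y a), (Rle_dec x a); unfold Rabs in *;
    repeat destruct Rcase_abs; lra.
Qed.

Lemma ex_antiderivative_ge (g : R -> R) a :
  (forall x, a <= x -> continuity_pt g x) -> exists G, forall x, a <= x -> is_derive G x (g x).
Proof.
  intros hg. set (gc x := g (Rmax x a)).
  assert (gc_cont : forall x, continuous gc x).
  { intros x. apply (continuous_comp (fun y => Rmax y a) g).
    - apply continuous_Rmax_l.
    - apply continuity_pt_filterlim, hg, Rmax_r. }
  exists (RInt gc a). intros x hx.
  assert (hG : is_derive (RInt gc a) x (gc x)).
  { apply (is_derive_RInt gc (RInt gc a) a x); [|apply gc_cont].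
    apply filter_forall. intros b. apply (RInt_correct (V := R_CompleteNormedModule)).
    apply (ex_RInt_continuous (V := R_CompleteNormedModule)). intros; apply gc_cont. }
  unfold gc in hG. rewrite Rmax_left in hG by lra. exact hG.
Qed.

Lemma ln1m_antitone y y0 : 0 <= y <= y0 -> y0 < 1 -> y0 + ln (1 - y0) <= y + ln (1 - y).
Proof.
  intros hy hy0.
  assert (hln : ln ((1 - y0) / (1 - y)) <= (1 - y0) / (1 - y) - 1).
  { pose proof (exp_ineq1_le (ln ((1 - y0) / (1 - y)))) as hexp.
    rewrite exp_ln in hexp by (apply Rdiv_lt_0_compat; lra). lra. }
  rewrite ln_div in hln by lra.
  assert ((1 - y0) / (1 - y) - 1 <= y - y0).
  { assert ((1 - y0) / (1 - y) * (1 - y) = 1 - y0) by (field; lra). nra. }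
  lra.
Qed.

Section Periodic.

Variables (f : R -> R) (T : R).
Hypothesis T_pos : 0 < T.
Hypothesis f_periodic : forall t, f (t + T) = f t.

Lemma periodic_shift_nat n t : f (t + INR n * T) = f t.
Proof.
  induction n as [|n IHn].
  - simpl. f_equal. ring.
  - rewrite S_INR. replace (t + (INR n + 1) * T) with (t + INR n * T + T) by ring.
    rewrite f_periodic. exact IHn.
Qed.

Lemma periodic_shift_Z z t : f (t + IZR z * T) = f t.
Proof.
  destruct (Z_le_gt_dec 0 z) as [hz | hz].
  - destruct (Z_of_nat_complete z hz) as [n ->].
    rewrite <- INR_IZR_INZ. apply periodic_shift_nat.
  - destruct (Z_of_nat_complete (- z) ltac:(lia)) as [n hn].
    rewrite <- (periodic_shift_nat n). f_equal.
    rewrite INR_IZR_INZ, <- hn, opp_IZR. ring.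
Qed.

Lemma periodic_reduce t : exists u, 0 <= u <= T /\ f t = f u.
Proof.
  destruct (base_Int_part (t / T)) as [hlo hhi].
  assert (t / T * T = t) by (field; lra).
  exists (t - IZR (Int_part (t / T)) * T). split; [split; nra|].
  rewrite <- (periodic_shift_Z (Int_part (t / T)) (t - _)). f_equal. ring.
Qed.

Lemma periodic_ex_min : (forall t, continuity_pt f t) -> exists tm, forall t, f tm <= f t.
Proof.
  intros hcont. destruct (continuity_ab_min f 0 T) as [tm [hmin _]]; [lra | auto |].
  exists tm. intros t. destruct (periodic_reduce t) as [u [hu ->]]. exact (hmin u hu).
Qed.

Lemma periodic_derive_nonpos_eq0 (df : R -> R) :
  (forall t, is_derive f t (df t)) -> (forall t, df t <= 0) -> forall t, df t = 0.
Proof.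
  intros hd hneg t.
  assert (f_const : forall u, f 0 = f u).
  { intros u. destruct (periodic_reduce u) as [v [hv ->]].
    pose proof (derive_nonpos_antitone f df 0 v (proj1 hv) (fun x _ => hd x) (fun x _ => hneg x)).
    pose proof (derive_nonpos_antitone f df v T (proj2 hv) (fun x _ => hd x) (fun x _ => hneg x)).
    pose proof (f_periodic 0) as hper. rewrite Rplus_0_l in hper. lra. }
  rewrite <- (is_derive_unique _ _ _ (hd t)). apply is_derive_unique.
  apply (is_derive_ext (fun _ => f 0)); [exact f_const|].
  exact (is_derive_const (K := R_AbsRing) (f 0) t).
Qed.

End Periodic.

Section RatioFreeSystem.

Variables (kappa dkappa p q : R -> R) (d : R).
Hypothesis kappa_derive : forall x, 0 < x -> is_derive kappa x (dkappa x).
Hypothesis dkappa_nonpos : forall x, 0 < x -> dkappa x <= 0.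
Hypothesis dkappa_cont : forall x, 0 < x -> continuity_pt dkappa x.
Hypothesis p_pos : forall x, 0 < x -> 0 < p x.
Hypothesis p_cont : forall x, 0 < x -> continuity_pt p x.
Hypothesis q_cont : forall x, 0 < x -> continuity_pt q x.

Variables (s c : R -> R) (T : R).
Hypothesis T_pos : 0 < T.
Hypothesis s_pos : forall t, 0 < s t.
Hypothesis c_range : forall t, 0 < c t < 1.
Hypothesis s_periodic : forall t, s (t + T) = s t.
Hypothesis c_periodic : forall t, c (t + T) = c t.
Hypothesis s_derive : forall t, is_derive s t (s t * (c t * kappa (s t) + d)).
Hypothesis c_derive : forall t, is_derive c t (- (1 - c t) * (c t * p (s t) - q (s t))).

Let rate t := c t * kappa (s t) + d.

Lemma kappa_antitone x y : 0 < x <= y -> kappa y <= kappa x.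
Proof.
  intros hxy. apply (derive_nonpos_antitone kappa dkappa); try lra;
    intros z hz; [apply kappa_derive | apply dkappa_nonpos]; lra.
Qed.

Lemma s_ex_min : exists tm, forall t, s tm <= s t.
Proof.
  apply (periodic_ex_min s T T_pos s_periodic).
  intros t. apply ex_derive_continuity_pt. eexists. apply s_derive.
Qed.

Lemma rate_eq0_at_min tm : (forall t, s tm <= s t) -> rate tm = 0.
Proof.
  intros hmin. pose proof (is_derive_min_eq0 s tm _ (s_derive tm) hmin) as h0.
  destruct (Rmult_integral _ _ h0) as [h | h]; [pose proof (s_pos tm); lra | exact h].
Qed.

Lemma const_of_rate_eq0 : (forall t, rate t = 0) -> forall t, s t = s 0 /\ c t = c 0.
Proof.
  intros hrate.
  assert (s_const : forall t, s t = s 0).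
  { apply derive_eq0_const. intros t. rewrite <- (Rmult_0_r (s t)), <- (hrate t). apply s_derive. }
  set (p0 := p (s 0)). set (q0 := q (s 0)). set (cstar := q0 / p0).
  assert (hp0 : 0 < p0) by apply p_pos, s_pos.
  set (V t := (c t - cstar) ^ 2).
  assert (hV : forall t, is_derive V t (- 2 * (1 - c t) * p0 * (c t - cstar) ^ 2)).
  { intros t. unfold V. auto_derive; [eexists; apply c_derive|].
    erewrite is_derive_unique by apply c_derive. rewrite (s_const t). fold p0 q0.
    unfold cstar. field. lra. }
  assert (hV_nonpos : forall t, - 2 * (1 - c t) * p0 * (c t - cstar) ^ 2 <= 0).
  { intros t. destruct (c_range t).
    enough (0 <= 2 * (1 - c t) * p0 * (c t - cstar) ^ 2) by lra.
    apply Rmult_le_pos; [|apply pow2_ge_0]. apply Rmult_le_pos; lra. }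
  assert (V_periodic : forall t, V (t + T) = V t)
    by (intros t; unfold V; rewrite c_periodic; reflexivity).
  assert (hV0 := periodic_derive_nonpos_eq0 V T T_pos V_periodic _ hV hV_nonpos).
  assert (c_eq : forall t, c t = cstar).
  { intros t. destruct (c_range t). pose proof (hV0 t) as h.
    apply Rmult_integral in h as [h | h]; nra. }
  intros t. rewrite (s_const t), (c_eq t), (c_eq 0). auto.
Qed.

Lemma rate_eq0_of_d_eq0 tm : (forall t, s tm <= s t) -> d = 0 -> forall t, rate t = 0.
Proof.
  intros tm_min d0.
  destruct (ex_antiderivative_ge (fun x => - kappa x / x) (s tm)) as [G hG].
  { intros x hx. pose proof (s_pos tm).
    apply continuity_pt_div; [| apply continuity_pt_id | lra].
    apply continuity_pt_opp, ex_derive_continuity_pt. eexists. apply kappa_derive. lra. }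
  assert (hV : forall t, is_derive (fun t => G (s t)) t (- c t * kappa (s t) ^ 2)).
  { intros t. replace (- c t * kappa (s t) ^ 2)
      with (s t * (c t * kappa (s t) + d) * (- kappa (s t) / s t)).
    - exact (is_derive_comp G s t _ _ (hG _ (tm_min t)) (s_derive t)).
    - rewrite d0. field. apply Rgt_not_eq, s_pos. }
  assert (hV_nonpos : forall t, - c t * kappa (s t) ^ 2 <= 0).
  { intros t. destruct (c_range t). pose proof (pow2_ge_0 (kappa (s t))). nra. }
  assert (V_periodic : forall t, G (s (t + T)) = G (s t))
    by (intros t; rewrite s_periodic; reflexivity).
  assert (hV0 := periodic_derive_nonpos_eq0 (fun t => G (s t)) T T_pos V_periodic _ hV hV_nonpos).
  intros t. destruct (c_range t). pose proof (hV0 t) as h.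
  apply Rmult_integral in h as [h | h]; [lra|].
  destruct (Req_dec (kappa (s t)) 0) as [hk | hk]; [| exfalso; exact (pow_nonzero _ 2 hk h)].
  unfold rate. rewrite hk, d0. ring.
Qed.

Section PositiveDrift.

Hypothesis d_pos : 0 < d.
Variable tm : R.
Hypothesis tm_min : forall t, s tm <= s t.

Let nullcline x := - d / kappa x.
Let lyap_factor x y := x * dkappa x * (y + ln (1 - y)) + (y * p x - q x).

Lemma kappa_lt_neg_d x : s tm <= x -> kappa x < - d.
Proof.
  intros hx. pose proof (rate_eq0_at_min tm tm_min) as h0. unfold rate in h0.
  destruct (c_range tm).
  pose proof (kappa_antitone (s tm) x (conj (s_pos tm) hx)).
  assert (kappa (s tm) < - d).
  { apply Rmult_lt_reg_r with (c tm); [lra|].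
    assert (d * c tm < d * 1) by (apply Rmult_lt_compat_l; lra). lra. }
  lra.
Qed.

Lemma nullcline_range x : s tm <= x -> 0 < nullcline x < 1.
Proof.
  intros hx. pose proof (kappa_lt_neg_d x hx). unfold nullcline.
  replace (- d / kappa x) with (d / - kappa x) by (field; lra).
  split; [apply Rdiv_lt_0_compat; lra|].
  apply Rmult_lt_reg_r with (- kappa x); [lra|].
  replace (d / - kappa x * - kappa x) with d by (field; lra). lra.
Qed.

Lemma lyap_factor_continuity_pt x :
  s tm <= x -> continuity_pt (fun y => - lyap_factor y (nullcline y) / y) x.
Proof.
  intros hx. pose proof (s_pos tm). pose proof (kappa_lt_neg_d x hx).
  pose proof (nullcline_range x hx).
  assert (kappa_cont : continuity_pt kappa x).
  { apply ex_derive_continuity_pt. eexists. apply kappa_derive. lra. }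
  assert (nullcline_cont : continuity_pt nullcline x).
  { apply continuity_pt_div; [apply continuity_pt_const; intros ? ?; reflexivity | auto | lra]. }
  assert (ln_cont : continuity_pt (fun y => ln (1 - nullcline y)) x).
  { apply (continuity_pt_comp (fun y => 1 - nullcline y) ln).
    - apply continuity_pt_minus; [apply continuity_pt_const; intros ? ?; reflexivity | auto].
    - apply continuity_pt_filterlim, continuous_ln. lra. }
  unfold lyap_factor. apply continuity_pt_div; [| apply continuity_pt_id | lra].
  apply continuity_pt_opp, continuity_pt_plus.
  - apply continuity_pt_mult; [apply continuity_pt_mult; [apply continuity_pt_id|]|].
    + apply dkappa_cont. lra.
    + apply continuity_pt_plus; auto.
  - apply continuity_pt_minus; [apply continuity_pt_mult|]; auto;
      [apply p_cont | apply q_cont]; lra.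
Qed.

Lemma lyap_derive (G : R -> R) :
  (forall x, s tm <= x -> is_derive G x (- lyap_factor x (nullcline x) / x)) ->
  forall t, is_derive (fun t => kappa (s t) * (c t + ln (1 - c t)) + d * ln (1 - c t) + G (s t)) t
              (rate t * (lyap_factor (s t) (c t) - lyap_factor (s t) (nullcline (s t)))).
Proof.
  intros hG t. pose proof (s_pos t). destruct (c_range t). pose proof (kappa_lt_neg_d _ (tm_min t)).
  auto_derive.
  - repeat split; try (eexists; first [exact (s_derive t) | exact (c_derive t)
                          | exact (kappa_derive _ (s_pos t)) | exact (hG _ (tm_min t))]); lra.
  - rewrite (is_derive_unique (fun x : R => s x) t _ (s_derive t)),
            (is_derive_unique (fun x : R => c x) t _ (c_derive t)),
            (is_derive_unique (fun x : R => kappa x) (s t) _ (kappa_derive _ (s_pos t))),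
            (is_derive_unique (fun x : R => G x) (s t) _ (hG _ (tm_min t))).
    replace (1 + - c t) with (1 - c t) by ring.
    unfold rate, lyap_factor, nullcline. field. lra.
Qed.

Lemma lyap_derive_le t :
  rate t * (lyap_factor (s t) (c t) - lyap_factor (s t) (nullcline (s t)))
  <= kappa (s t) * p (s t) * (c t - nullcline (s t)) ^ 2.
Proof.
  pose proof (s_pos t) as hs. destruct (c_range t). pose proof (nullcline_range _ (tm_min t)).
  pose proof (kappa_lt_neg_d _ (tm_min t)). pose proof (dkappa_nonpos _ hs).
  assert (hrate : rate t = kappa (s t) * (c t - nullcline (s t)))
    by (unfold rate, nullcline; field; lra).
  assert (hmono : (c t - nullcline (s t)) *
                  (c t + ln (1 - c t) - (nullcline (s t) + ln (1 - nullcline (s t)))) <= 0).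
  { destruct (Rle_dec (c t) (nullcline (s t))).
    - pose proof (ln1m_antitone (c t) (nullcline (s t)) ltac:(lra) ltac:(lra)). nra.
    - pose proof (ln1m_antitone (nullcline (s t)) (c t) ltac:(lra) ltac:(lra)). nra. }
  assert (hcoef : 0 <= kappa (s t) * s t * dkappa (s t)).
  { replace (kappa (s t) * s t * dkappa (s t)) with (- kappa (s t) * s t * - dkappa (s t)) by ring.
    apply Rmult_le_pos; [apply Rmult_le_pos|]; lra. }
  assert (hprod := Rmult_le_compat_l _ _ _ hcoef hmono). rewrite Rmult_0_r in hprod.
  rewrite hrate. unfold lyap_factor. lra.
Qed.

Lemma rate_eq0_of_d_pos t : rate t = 0.
Proof.
  destruct (ex_antiderivative_ge _ (s tm) lyap_factor_continuity_pt) as [G hG].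
  assert (hkp : forall t, kappa (s t) * p (s t) < 0).
  { intros u. pose proof (kappa_lt_neg_d _ (tm_min u)). pose proof (p_pos _ (s_pos u)). nra. }
  set (Phi t := kappa (s t) * (c t + ln (1 - c t)) + d * ln (1 - c t) + G (s t)).
  assert (Phi_periodic : forall t, Phi (t + T) = Phi t)
    by (intros u; unfold Phi; rewrite s_periodic, c_periodic; reflexivity).
  assert (dPhi_nonpos : forall t,
            rate t * (lyap_factor (s t) (c t) - lyap_factor (s t) (nullcline (s t))) <= 0).
  { intros u. apply (Rle_trans _ _ _ (lyap_derive_le u)).
    pose proof (hkp u). pose proof (pow2_ge_0 (c u - nullcline (s u))). nra. }
  assert (hPhi0 :=
    periodic_derive_nonpos_eq0 Phi T T_pos Phi_periodic _ (lyap_derive G hG) dPhi_nonpos).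
  pose proof (lyap_derive_le t) as hle. rewrite hPhi0 in hle. pose proof (hkp t).
  pose proof (pow2_ge_0 (c t - nullcline (s t))).
  assert (hsq : (c t - nullcline (s t)) ^ 2 = 0) by nra.
  destruct (Req_dec (c t - nullcline (s t)) 0) as [h0 | h0];
    [| exfalso; exact (pow_nonzero _ 2 h0 hsq)].
  pose proof (kappa_lt_neg_d _ (tm_min t)).
  unfold rate. replace (c t) with (nullcline (s t)) by lra. unfold nullcline. field. lra.
Qed.

End PositiveDrift.

Theorem periodic_solution_const : 0 <= d -> forall t, s t = s 0 /\ c t = c 0.
Proof.
  intros hd. apply const_of_rate_eq0. destruct s_ex_min as [tm tm_min].
  destruct hd as [hd | hd].
  - exact (rate_eq0_of_d_pos hd tm tm_min).
  - exact (rate_eq0_of_d_eq0 tm tm_min (eq_sym hd)).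
Qed.

End RatioFreeSystem.

Definition ratio_drift (aL aR gRL gLR x : R) : R := aR - aL + gLR / x - gRL * x.
Definition mean_recruitment (aL aR gRL gLR x : R) : R := (aL + gLR + (aR + gRL) * x) / (1 + x).
Definition mean_death (muL muR x : R) : R := (muL + muR * x) / (1 + x).

Lemma fR_swap a mu g l r : fR a mu g l r = fL a mu g r l.
Proof. unfold fR, fL, Cfree. ring. Qed.

Section Model.

Variables (aL aR muL muR gRL gLR : R).
Hypothesis aL_ge0 : 0 <= aL.
Hypothesis aR_ge0 : 0 <= aR.
Hypothesis gRL_pos : 0 < gRL.
Hypothesis gLR_pos : 0 < gLR.

Variables (L Rt : R -> R) (T : R).
Hypothesis T_pos : 0 < T.
Hypothesis L_derive : forall t, is_derive L t (fL aL muL gRL (L t) (Rt t)).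
Hypothesis R_derive : forall t, is_derive Rt t (fR aR muR gLR (L t) (Rt t)).
Hypothesis L_periodic : forall t, L (t + T) = L t.
Hypothesis R_periodic : forall t, Rt (t + T) = Rt t.
Hypothesis interior : forall t, in_simplex_interior (L t) (Rt t).

Lemma ratio_derive t : is_derive (fun t => Rt t / L t) t
  (Rt t / L t * (Cfree (L t) (Rt t) * ratio_drift aL aR gRL gLR (Rt t / L t) + (muL - muR))).
Proof.
  destruct (interior t) as [hL [hR _]].
  auto_derive.
  - repeat split; try (eexists; first [exact (L_derive t) | exact (R_derive t)]); lra.
  - rewrite (is_derive_unique (fun x : R => L x) t _ (L_derive t)),
            (is_derive_unique (fun x : R => Rt x) t _ (R_derive t)).
    unfold fL, fR, Cfree, ratio_drift. field. lra.
Qed.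

Lemma Cfree_derive t : is_derive (fun t => Cfree (L t) (Rt t)) t
  (- (1 - Cfree (L t) (Rt t)) * (Cfree (L t) (Rt t) * mean_recruitment aL aR gRL gLR (Rt t / L t)
                                   - mean_death muL muR (Rt t / L t))).
Proof.
  destruct (interior t) as [hL [hR _]].
  unfold Cfree at 1. auto_derive.
  - repeat split; eexists; first [exact (L_derive t) | exact (R_derive t)].
  - rewrite (is_derive_unique (fun x : R => L x) t _ (L_derive t)),
            (is_derive_unique (fun x : R => Rt x) t _ (R_derive t)).
    unfold fL, fR, Cfree, mean_recruitment, mean_death. field. lra.
Qed.

Lemma periodic_interior_const : muR <= muL -> forall t, L t = L 0 /\ Rt t = Rt 0.
Proof.
  intros hmu. set (s t := Rt t / L t). set (c t := Cfree (L t) (Rt t)).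
  assert (hsc : forall t, s t = s 0 /\ c t = c 0).
  { apply (periodic_solution_const (ratio_drift aL aR gRL gLR) (fun x => - gLR / x ^ 2 - gRL)
             (mean_recruitment aL aR gRL gLR) (mean_death muL muR) (muL - muR)) with T;
      try lra.
    - intros x hx. unfold ratio_drift. auto_derive; [lra|]. field. lra.
    - intros x hx. pose proof (Rdiv_lt_0_compat _ _ gLR_pos (pow_lt x 2 hx)). lra.
    - intros x hx. apply ex_derive_continuity_pt. auto_derive. apply Rgt_not_eq. nra.
    - intros x hx. unfold mean_recruitment. apply Rdiv_lt_0_compat; nra.
    - intros x hx. apply ex_derive_continuity_pt. unfold mean_recruitment. auto_derive. lra.
    - intros x hx. apply ex_derive_continuity_pt. unfold mean_death. auto_derive. lra.
    - intros t. destruct (interior t) as [hL [hR _]]. apply Rdiv_lt_0_compat; lra.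
    - intros t. destruct (interior t) as [hL [hR hLR]]. unfold c, Cfree. lra.
    - intros t. unfold s. rewrite L_periodic, R_periodic. reflexivity.
    - intros t. unfold c. rewrite L_periodic, R_periodic. reflexivity.
    - exact ratio_derive.
    - exact Cfree_derive. }
  assert (L_eq : forall t, L t = (1 - c t) / (1 + s t)).
  { intros t. destruct (interior t) as [hL [hR _]]. unfold c, s, Cfree. field. lra. }
  intros t. destruct (hsc t) as [hs hc].
  assert (hLt : L t = L 0) by (rewrite !L_eq, hs, hc; reflexivity).
  split; [exact hLt|].
  destruct (interior t) as [hL _]. destruct (interior 0) as [hL0 _].
  replace (Rt t) with (s t * L t) by (unfold s; field; lra).
  replace (Rt 0) with (s 0 * L 0) by (unfold s; field; lra).
  rewrite hs, hLt. reflexivity.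
Qed.

End Model.

Theorem corollary3p10
  (aL aR muL muR gRL gLR : R)
  (haL : 0 < aL) (haR : 0 < aR) (hmuL : 0 < muL) (hmuR : 0 < muR)
  (hgRL : 0 < gRL) (hgLR : 0 < gLR)
  (L Rt : R -> R) (T : R) (hT : 0 < T)
  (hL : forall t, is_derive L t (fL aL muL gRL (L t) (Rt t)))
  (hR : forall t, is_derive Rt t (fR aR muR gLR (L t) (Rt t)))
  (hper : forall t, L (t + T) = L t /\ Rt (t + T) = Rt t)
  (hint : forall t, in_simplex_interior (L t) (Rt t)) :
  forall t, L t = L 0 /\ Rt t = Rt 0.
Proof.
  destruct (Rle_or_lt muR muL) as [hmu | hmu].
  - exact (periodic_interior_const aL aR muL muR gRL gLR (Rlt_le _ _ haL) (Rlt_le _ _ haR)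
             hgRL hgLR L Rt T hT hL hR (fun t => proj1 (hper t)) (fun t => proj2 (hper t))
             hint hmu).
  - assert (hL' : forall t, is_derive Rt t (fL aR muR gLR (Rt t) (L t)))
      by (intros t; rewrite <- fR_swap; apply hR).
    assert (hR' : forall t, is_derive L t (fR aL muL gRL (Rt t) (L t)))
      by (intros t; rewrite fR_swap; apply hL).
    assert (hint' : forall t, in_simplex_interior (Rt t) (L t))
      by (intros t; destruct (hint t) as [? [? ?]]; repeat split; lra).
    intros t.
    destruct (periodic_interior_const aR aL muR muL gLR gRL (Rlt_le _ _ haR) (Rlt_le _ _ haL)
                hgLR hgRL Rt L T hT hL' hR' (fun t => proj2 (hper t)) (fun t => proj1 (hper t))
                hint' (Rlt_le _ _ hmu) t).
    split; assumption.
Qed.
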